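(* For a $d$-dimensional state ensemble $\Omega=\{(p_j,\rho_j)\}_{j=0}^{k-1}$, \[ P_{\mathrm{suc},\mathcal{M}_{\mathcal{I}}}(\Omega)=\widetilde{P}_{\mathrm{suc,SIO}}(\Omega)\ \big(=\widetilde{P}_{\mathrm{suc,DIO}}(\Omega)\big). \]
   Context: $\mathcal{M}_{\mathcal{I}}$ is the set of incoherent measurements: POVMs $\{E_m\}$ with $\Delta(E_m)=E_m$ for all $m$, where $\Delta(\rho)=\sum_i|i\rangle\langle i|\rho|i\rangle\langle i|$ is complete dephasing in the computational basis; $P_{\mathrm{suc},\mathcal{M}_{\mathcal{I}}}(\Omega)=\max_{\{E_j\}\in\mathcal{M}_{\mathcal{I}}}\sum_jp_j\mathrm{tr}(E_j\rho_j)$. For a set of free operations $\mathcal{O}$, $\widetilde{P}_{\mathrm{suc},\mathcal{O}}(\Omega)=\sup\sum_jp_j\mathrm{tr}[\mathcal{N}_{A\to BA'}(\rho_j)(|j\rangle\langle j|_B\otimes I_{A'})]$ over $\mathcal{N}_{A\to BA'}\in\mathcal{O}$, $\dim B=k$, $A'\cong A$. DIO are channels commuting with $\Delta$; SIO (strictly incoherent operations) are channels with Kraus operators $\{K_n\}$ such that both $\{K_n\}$ and $\{K_n^\dagger\}$ map incoherent states to (unnormalized) incoherent states; SIO $\subsetneq$ DIO. *)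

From HB Require Import structures.
From mathcomp Require Import all_boot all_order all_algebra.
From mathcomp Require Import complex mxtens.
From mathcomp Require Import classical_sets reals.
Set Implicit Arguments. Unset Strict Implicit. Unset Printing Implicit Defensive.
Import Order.TTheory GRing.Theory Num.Theory.
Local Open Scope ring_scope.

Section QDefs.
Variable R : realType.
Local Notation C := (R[i]).

Definition adj {m n} (A : 'M[C]_(m, n)) : 'M[C]_(n, m) := (map_mx Num.conj A)^T.

Definition dephase {n} (A : 'M[C]_n) : 'M[C]_n :=
  \matrix_(i, j) (if i == j then A i j else 0).

(* positive semidefinite (over C this forces hermiticity) *)
Definition psd {n} (A : 'M[C]_n) : Prop :=
  forall v : 'cV[C]_n, 0 <= (adj v *m A *m v) 0 0.

Definition is_state {n} (A : 'M[C]_n) : Prop := psd A /\ \tr A = 1.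

Definition incoherent_state {n} (A : 'M[C]_n) : Prop :=
  is_state A /\ dephase A = A.

Definition ensemble {d k} (p : 'I_k -> R) (rho : 'I_k -> 'M[C]_d) : Prop :=
  [/\ forall j, 0 <= p j, \sum_j p j = 1 & forall j, is_state (rho j)].

Definition POVM {n k} (E : 'I_k -> 'M[C]_n) : Prop :=
  (forall j, psd (E j)) /\ \sum_j E j = 1%:M.

Definition incoherent_POVM {n k} (E : 'I_k -> 'M[C]_n) : Prop :=
  POVM E /\ forall j, dephase (E j) = E j.

Definition kraus_apply {m n r} (K : 'I_r -> 'M[C]_(m, n)) (X : 'M[C]_n) : 'M[C]_m :=
  \sum_l (K l *m X *m adj (K l)).

Definition trace_preserving {m n r} (K : 'I_r -> 'M[C]_(m, n)) : Prop :=
  \sum_l (adj (K l) *m K l) = 1%:M.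

Definition channel {m n} (f : 'M[C]_n -> 'M[C]_m) : Prop :=
  exists r (K : 'I_r -> 'M[C]_(m, n)),
    trace_preserving K /\ forall X, f X = kraus_apply K X.

Definition DIO {m n} (f : 'M[C]_n -> 'M[C]_m) : Prop :=
  channel f /\ forall X, f (dephase X) = dephase (f X).

Definition SIO {m n} (f : 'M[C]_n -> 'M[C]_m) : Prop :=
  exists r (K : 'I_r -> 'M[C]_(m, n)),
    [/\ trace_preserving K, (forall X, f X = kraus_apply K X),
        (forall l rho, incoherent_state rho ->
           dephase (K l *m rho *m adj (K l)) = K l *m rho *m adj (K l))
      & (forall l rho, incoherent_state rho ->
           dephase (adj (K l) *m rho *m K l) = adj (K l) *m rho *m K l)].

Definition Psuc_MI {d k} (p : 'I_k -> R) (rho : 'I_k -> 'M[C]_d) : R :=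
  sup [set x : R | exists E : 'I_k -> 'M[C]_d, incoherent_POVM E /\
         x = complex.Re (\sum_j real_complex R (p j) * \tr (E j *m rho j))].

(* tilde P_suc,O(Omega): channels A -> B A', dim B = k, A' ~ A (dim d);
   the output space B (x) A' is 'M_(k * d) with the Kronecker product *t *)
Definition Psuc_tilde {d k}
    (O : ('M[C]_d -> 'M[C]_(k * d)) -> Prop)
    (p : 'I_k -> R) (rho : 'I_k -> 'M[C]_d) : R :=
  sup [set x : R | exists N : 'M[C]_d -> 'M[C]_(k * d), O N /\
         x = complex.Re (\sum_j real_complex R (p j) *
               \tr (N (rho j) *m (delta_mx j j *t (1%:M : 'M[C]_d))))].

End QDefs.

(* A channel N with Δ ∘ N = Δ ∘ N ∘ Δ (non-activating) only sees the populations
   of its input, so against the block projectors P_j = |j><j| ⊗ I it acts as the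
   incoherent POVM E_j = Δ(N^†(P_j)): tr(N(ρ) P_j) = tr(E_j ρ).  DIO are
   non-activating by definition, and so are SIO: a Kraus operator K whose adjoint
   maps incoherent states to incoherent ones has at most one nonzero entry per row,
   and then Δ(K X K^†) = Δ(K Δ(X) K^†).  Conversely an incoherent POVM {E_j} is
   realised by the Kraus operators |j> ⊗ √E_j, which have at most one nonzero entry
   in each row and column, hence define a channel that is both SIO and DIO.  So the
   three optimisations range over the same set of values. *)

From mathcomp Require Import all_boot all_order all_algebra.
From mathcomp Require Import complex mxtens.
From mathcomp Require Import classical_sets reals.
Set Implicit Arguments. Unset Strict Implicit. Unset Printing Implicit Defensive.
Import Order.TTheory GRing.Theory Num.Theory.
Local Open Scope ring_scope.

Section IncoherentDiscrimination.
Variable R : realType.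
Local Notation C := R[i].

Lemma mulmx3E m n p q (A : 'M[C]_(m, n)) (X : 'M[C]_(n, p)) (B : 'M[C]_(p, q)) i l :
  (A *m X *m B) i l = \sum_j \sum_k A i j * X j k * B k l.
Proof.
rewrite mxE exchange_big; apply: eq_bigr => k _.
by rewrite mxE big_distrl.
Qed.

Lemma mul_delta_mx_diagE m n q (A : 'M[C]_(m, n)) (B : 'M[C]_(n, q)) a i l :
  (A *m delta_mx a a *m B) i l = A i a * B a l.
Proof.
rewrite mulmx3E (big_only1 a) // => [|b ba _]; last first.
  by rewrite big1 // => c _; rewrite mxE (negbTE ba) mulr0 mul0r.
rewrite (big_only1 a) // => [|c ca _]; first by rewrite mxE !eqxx mulr1.
by rewrite mxE (negbTE ca) andbF mulr0 mul0r.
Qed.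

Lemma adjE m n (A : 'M[C]_(m, n)) i j : adj A i j = (A j i)^*.
Proof. by rewrite !mxE. Qed.

Lemma adjK m n (A : 'M[C]_(m, n)) : adj (adj A) = A.
Proof. by apply/matrixP => i j; rewrite !adjE conjCK. Qed.

Lemma adjM m n p (A : 'M[C]_(m, n)) (B : 'M[C]_(n, p)) :
  adj (A *m B) = adj B *m adj A.
Proof. by rewrite /adj map_mxM trmx_mul. Qed.

Lemma dephaseE n (A : 'M[C]_n) i j : dephase A i j = if i == j then A i j else 0.
Proof. by rewrite mxE. Qed.

Lemma dephaseK n (A : 'M[C]_n) : dephase (dephase A) = dephase A.
Proof. by apply/matrixP => i j; rewrite !dephaseE; case: eqP. Qed.

Lemma dephase1 n : dephase (1%:M : 'M[C]_n) = 1%:M.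
Proof. by apply/matrixP => i j; rewrite dephaseE mxE; case: eqP. Qed.

Lemma dephase_sum n (I : finType) (F : I -> 'M[C]_n) :
  dephase (\sum_l F l) = \sum_l dephase (F l).
Proof.
apply/matrixP => a b; rewrite dephaseE !summxE.
under [RHS]eq_bigr do rewrite dephaseE.
by case: (a == b) => //=; rewrite big1_eq.
Qed.

Lemma mxtrace_mul_dephase n (A B : 'M[C]_n) :
  \tr (A *m dephase B) = \tr (dephase A *m B).
Proof.
apply: eq_bigr => i _; rewrite !mxE (big_only1 i) // => [|j ji _]; last first.
  by rewrite dephaseE (negbTE ji) mulr0.
rewrite (big_only1 i) // => [|j ji _]; first by rewrite !dephaseE eqxx.
by rewrite dephaseE eq_sym (negbTE ji) mul0r.
Qed.

Lemma psd_diag_ge0 n (A : 'M[C]_n) i : psd A -> 0 <= A i i.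
Proof.
move=> /(_ (delta_mx i 0)); rewrite /adj map_delta_mx trmx_delta.
by rewrite -rowE -colE !mxE.
Qed.

Lemma psd_diag_mx n (A : 'M[C]_n) :
  dephase A = A -> (forall i, 0 <= A i i) -> psd A.
Proof.
move=> dA A_ge0 v; rewrite -dA mulmx3E; apply: sumr_ge0 => i _.
rewrite (big_only1 i) // => [|j ji _]; last first.
  by rewrite dephaseE eq_sym (negbTE ji) mulr0 mul0r.
by rewrite dephaseE eqxx adjE mulrAC mulr_ge0 // mulrC mul_conjC_ge0.
Qed.

Lemma psd_dephase n (A : 'M[C]_n) : psd A -> psd (dephase A).
Proof.
move=> psdA; apply: psd_diag_mx (dephaseK A) _ => i.
by rewrite dephaseE eqxx psd_diag_ge0.
Qed.

Lemma psd_adj_mul m n (A : 'M[C]_m) (M : 'M[C]_(m, n)) :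
  psd A -> psd (adj M *m A *m M).
Proof. by move=> psdA v; have := psdA (M *m v); rewrite adjM !mulmxA. Qed.

Lemma psd_sum n (I : finType) (F : I -> 'M[C]_n) :
  (forall l, psd (F l)) -> psd (\sum_l F l).
Proof.
move=> psdF v; rewrite mulmx_sumr mulmx_suml summxE.
by apply: sumr_ge0 => l _; exact: psdF.
Qed.

Definition row_sparse m n (K : 'M[C]_(m, n)) : Prop :=
  forall a b c, K a b != 0 -> K a c != 0 -> b = c.

Lemma row_sparse_mul_conj m n (K : 'M[C]_(m, n)) a b c :
  row_sparse K -> b != c -> K a b * (K a c)^* = 0.
Proof.
move=> sK bc; apply/eqP; rewrite mulf_eq0 conjC_eq0.
by apply: contraR bc => /norP[nz_b nz_c]; apply/eqP; exact: sK nz_b nz_c.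
Qed.

Lemma row_sparse_adj_tr m n (K : 'M[C]_(m, n)) :
  row_sparse K -> row_sparse (adj K)^T.
Proof. by move=> sK a b c; rewrite !mxE !conjC_eq0; exact: sK. Qed.

Lemma dephase_mul_adj_dephase m n (K : 'M[C]_(m, n)) (X : 'M[C]_n) :
  row_sparse K -> dephase (K *m X *m adj K) = dephase (K *m dephase X *m adj K).
Proof.
move=> sK; apply/matrixP => a a'; rewrite !dephaseE; case: eqP => // <-.
rewrite !mulmx3E; apply: eq_bigr => b _; apply: eq_bigr => c _.
rewrite dephaseE adjE; case: (b =P c) => [-> //|/eqP bc].
by rewrite mulr0 mul0r mulrAC row_sparse_mul_conj // mul0r.
Qed.

Lemma mul_adj_dephase_diagonal m n (K : 'M[C]_(m, n)) (X : 'M[C]_n) :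
  row_sparse K^T -> dephase (K *m dephase X *m adj K) = K *m dephase X *m adj K.
Proof.
move=> sKT; apply/matrixP => a a'; rewrite dephaseE; case: eqP => // /eqP aa'.
rewrite mulmx3E big1 // => b _; rewrite big1 // => c _.
rewrite dephaseE adjE; case: (b =P c) => [<-|]; last by rewrite mulr0 mul0r.
by have := row_sparse_mul_conj b sKT aa'; rewrite !mxE mulrAC => ->; rewrite mul0r.
Qed.

Lemma incoherent_delta_mx n (a : 'I_n) : incoherent_state (delta_mx a a : 'M[C]_n).
Proof.
have dD : dephase (delta_mx a a : 'M[C]_n) = delta_mx a a.
  apply/matrixP => i j; rewrite dephaseE mxE; case: (i =P j) => [-> //|ij].
  case: (i =P a) => [ia|] //=; case: (j =P a) => [ja|] //.
  by case: ij; rewrite ia ja.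
split=> //; split; first by apply: psd_diag_mx => // i; rewrite mxE ler0n.
by rewrite /mxtrace (big_only1 a) // => [|i ia _]; rewrite mxE ?eqxx // (negbTE ia).
Qed.

Definition kraus_dual m n r (K : 'I_r -> 'M[C]_(m, n)) (Y : 'M[C]_m) : 'M[C]_n :=
  \sum_l (adj (K l) *m Y *m K l).

Definition nonactivating m n (f : 'M[C]_n -> 'M[C]_m) : Prop :=
  forall X, dephase (f X) = dephase (f (dephase X)).

Section Kraus.
Variables m n r : nat.
Implicit Types (K : 'I_r -> 'M[C]_(m, n)) (X : 'M[C]_n) (Y : 'M[C]_m).

Lemma mxtrace_kraus_dual K X Y :
  \tr (kraus_apply K X *m Y) = \tr (X *m kraus_dual K Y).
Proof.
rewrite /kraus_apply /kraus_dual mulmx_suml mulmx_sumr !raddf_sum /=.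
by apply: eq_bigr => l _; rewrite -!mulmxA mxtrace_mulC !mulmxA.
Qed.

Lemma psd_kraus_dual K Y : psd Y -> psd (kraus_dual K Y).
Proof. by move=> psdY; apply: psd_sum => l; exact: psd_adj_mul. Qed.

Lemma POVM_kraus_dual k K (Q : 'I_k -> 'M[C]_m) :
  trace_preserving K -> POVM Q -> POVM (fun j => kraus_dual K (Q j)).
Proof.
move=> TP [psdQ sumQ]; split=> [j|]; first exact: psd_kraus_dual.
rewrite /kraus_dual exchange_big /=.
by under eq_bigr do rewrite -mulmx_suml -mulmx_sumr sumQ mulmx1.
Qed.

Lemma mxtrace_nonactivating K (N : 'M[C]_n -> 'M[C]_m) X Y :
  (forall X, N X = kraus_apply K X) -> nonactivating N -> dephase Y = Y ->
  \tr (N X *m Y) = \tr (dephase (kraus_dual K Y) *m X).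
Proof.
move=> NK naN dY; rewrite -{1}dY mxtrace_mul_dephase naN -mxtrace_mul_dephase dY.
by rewrite NK mxtrace_kraus_dual -mxtrace_mul_dephase mxtrace_mulC.
Qed.

Lemma nonactivating_row_sparse K :
  (forall l, row_sparse (K l)) -> nonactivating (kraus_apply K).
Proof.
move=> sK X; rewrite /kraus_apply !dephase_sum.
by apply: eq_bigr => l _; exact: dephase_mul_adj_dephase.
Qed.

Lemma sparse_kraus_SIO K :
  trace_preserving K -> (forall l, row_sparse (K l)) -> (forall l, row_sparse (K l)^T) ->
  SIO (kraus_apply K).
Proof.
move=> TP sK sKT; exists r, K; split=> // l rho [_ drho].
  by rewrite -drho mul_adj_dephase_diagonal.
have := mul_adj_dephase_diagonal rho (row_sparse_adj_tr (sK l)).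
by rewrite adjK drho.
Qed.

Lemma sparse_kraus_DIO K :
  trace_preserving K -> (forall l, row_sparse (K l)) -> (forall l, row_sparse (K l)^T) ->
  DIO (kraus_apply K).
Proof.
move=> TP sK sKT; split; first by exists r, K.
move=> X; rewrite /kraus_apply dephase_sum; apply: eq_bigr => l _.
by rewrite dephase_mul_adj_dephase // mul_adj_dephase_diagonal.
Qed.

End Kraus.

Lemma incoherent_POVM_dephase n k (E : 'I_k -> 'M[C]_n) :
  POVM E -> incoherent_POVM (fun j => dephase (E j)).
Proof.
case=> psdE sumE; split=> [|j]; last exact: dephaseK.
by split=> [j|]; [exact: psd_dephase | rewrite -dephase_sum sumE dephase1].
Qed.

Lemma row_sparse_SIO m n (K : 'M[C]_(m, n)) :
  (forall rho, incoherent_state rho -> dephase (adj K *m rho *m K) = adj K *m rho *m K) ->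
  row_sparse K.
Proof.
move=> incK a b c nz_b nz_c; apply/eqP; apply: contraT => bc.
have := congr1 (fun M : 'M[C]_n => M b c) (incK _ (incoherent_delta_mx a)).
rewrite /= dephaseE (negbTE bc) mul_delta_mx_diagE adjE => /esym/eqP.
by rewrite mulf_eq0 conjC_eq0 (negbTE nz_b) (negbTE nz_c).
Qed.

Lemma SIO_nonactivating m n (N : 'M[C]_n -> 'M[C]_m) :
  SIO N -> channel N /\ nonactivating N.
Proof.
case=> r [K [TP NK _ incK]]; split; first by exists r, K.
move=> X; rewrite !NK; apply: nonactivating_row_sparse => l.
exact: row_sparse_SIO (incK l).
Qed.

Lemma DIO_nonactivating m n (N : 'M[C]_n -> 'M[C]_m) :
  DIO N -> channel N /\ nonactivating N.
Proof. by case=> chN covN; split=> // X; rewrite -!covN dephaseK. Qed.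

Section Measurement.
Variables d k : nat.

Definition block_proj (j : 'I_k) : 'M[C]_(k * d) := delta_mx j j *t 1%:M.

Lemma block_projE j a b :
  block_proj j a b = ((a == b) && ((mxtens_unindex a).1 == j))%:R.
Proof.
rewrite -(mxtens_unindexK a) -(mxtens_unindexK b).
case: (mxtens_unindex a) (mxtens_unindex b) => [i1 j1] [i2 j2].
rewrite tensmxE !mxE mxtens_indexK /= (inj_eq (can_inj (@mxtens_indexK _ _))).
rewrite xpair_eqE -natrM mulnb; congr (_%:R).
case: (i1 =P j) => [->|ne1]; case: (i2 =P j) => [->|ne2]; rewrite ?eqxx ?andbT ?andbF //=.
by rewrite eq_sym (introF eqP ne2).
Qed.

Lemma dephase_block_proj j : dephase (block_proj j) = block_proj j.
Proof.
apply/matrixP => a b; rewrite dephaseE block_projE.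
by case: eqVneq => // ->.
Qed.

Lemma POVM_block_proj : POVM block_proj.
Proof.
split=> [j|].
  by apply: psd_diag_mx => [|a]; rewrite ?dephase_block_proj // block_projE ler0n.
apply/matrixP => a b; rewrite summxE mxE.
under eq_bigr do rewrite block_projE.
case: (a == b) => /=; last by rewrite big1.
by rewrite (big_only1 (mxtens_unindex a).1) ?eqxx // => j /negbTE; rewrite eq_sym => ->.
Qed.

Variable E : 'I_k -> 'M[C]_d.
Hypothesis incE : incoherent_POVM E.

(* K_j = |j> ⊗ √E_j, written entrywise since E_j is diagonal *)
Definition meas_kraus (j : 'I_k) : 'M[C]_(k * d, d) :=
  \matrix_(a, b) (if a == mxtens_index (j, b) then sqrtC (E j b b) else 0).

Lemma meas_kraus_neq0 j a b : meas_kraus j a b != 0 -> a = mxtens_index (j, b).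
Proof. by rewrite mxE; case: (a =P _) => [-> //|_]; rewrite eqxx. Qed.

Lemma row_sparse_meas_kraus j : row_sparse (meas_kraus j).
Proof.
move=> a b c /meas_kraus_neq0 -> /meas_kraus_neq0 /(can_inj (@mxtens_indexK _ _)).
by case.
Qed.

Lemma row_sparse_meas_kraus_tr j : row_sparse (meas_kraus j)^T.
Proof.
move=> b a a'; rewrite ![(meas_kraus j)^T _ _]mxE.
by move=> /meas_kraus_neq0 -> /meas_kraus_neq0 ->.
Qed.

Lemma adj_meas_kraus_mul j : adj (meas_kraus j) *m meas_kraus j = E j.
Proof.
have E_ge0 b : 0 <= E j b b by apply: psd_diag_ge0; exact: incE.1.1.
apply/matrixP => b c; rewrite mxE (big_only1 (mxtens_index (j, b))) // => [|a ab _].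
  rewrite adjE !mxE eqxx geC0_conj ?sqrtC_ge0 //.
  case: (b =P c) => [<-|/eqP bc]; first by rewrite eqxx -expr2 sqrtCK.
  rewrite (inj_eq (can_inj (@mxtens_indexK _ _))) xpair_eqE eqxx (negbTE bc) mulr0.
  by rewrite -(incE.2 j) dephaseE (negbTE bc).
rewrite adjE; case: (meas_kraus j a b =P 0) => [->|/eqP/meas_kraus_neq0 abj].
  by rewrite conjC0 mul0r.
by rewrite abj eqxx in ab.
Qed.

Lemma block_proj_mul_meas_kraus i j :
  block_proj i *m meas_kraus j = (i == j)%:R *: meas_kraus j.
Proof.
apply/matrixP => a b; rewrite [LHS]mxE [RHS]mxE.
rewrite (big_only1 a) // => [|x xa _]; last first.
  by rewrite block_projE eq_sym (negbTE xa) mul0r.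
rewrite block_projE eqxx andTb.
case: (meas_kraus j a b =P 0) => [->|/eqP/meas_kraus_neq0 ->]; first by rewrite !mulr0.
by rewrite mxtens_indexK eq_sym mulrC.
Qed.

Lemma kraus_dual_meas_kraus i : kraus_dual meas_kraus (block_proj i) = E i.
Proof.
rewrite /kraus_dual (bigD1 i) //= big1 => [|j ji];
  rewrite -mulmxA block_proj_mul_meas_kraus.
  by rewrite eqxx scale1r addr0 adj_meas_kraus_mul.
by rewrite eq_sym (negbTE ji) scale0r mulmx0.
Qed.

Lemma trace_preserving_meas_kraus : trace_preserving meas_kraus.
Proof.
rewrite /trace_preserving; under eq_bigr do rewrite adj_meas_kraus_mul.
exact: incE.1.2.
Qed.

Lemma SIO_meas_kraus : SIO (kraus_apply meas_kraus).
Proof.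
apply: sparse_kraus_SIO; [exact: trace_preserving_meas_kraus |
  exact: row_sparse_meas_kraus | exact: row_sparse_meas_kraus_tr].
Qed.

Lemma DIO_meas_kraus : DIO (kraus_apply meas_kraus).
Proof.
apply: sparse_kraus_DIO; [exact: trace_preserving_meas_kraus |
  exact: row_sparse_meas_kraus | exact: row_sparse_meas_kraus_tr].
Qed.

End Measurement.

Lemma Psuc_tilde_eq_MI d k (O : ('M[C]_d -> 'M[C]_(k * d)) -> Prop)
    (p : 'I_k -> R) (rho : 'I_k -> 'M[C]_d) :
  (forall N, O N -> channel N /\ nonactivating N) ->
  (forall E, incoherent_POVM E -> O (kraus_apply (meas_kraus E))) ->
  Psuc_tilde O p rho = Psuc_MI p rho.
Proof.
move=> naO measO; congr sup; apply/seteqP; split=> x /=.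
  case=> N [ON ->]; have [[r [K [TP NK]]] naN] := naO N ON.
  exists (fun j => dephase (kraus_dual K (block_proj d j))); split.
    exact/incoherent_POVM_dephase/POVM_kraus_dual/POVM_block_proj.
  congr (complex.Re _); apply: eq_bigr => j _.
  by rewrite (mxtrace_nonactivating _ NK naN (dephase_block_proj d j)).
case=> E [incE ->]; exists (kraus_apply (meas_kraus E)); split; first exact: measO.
have naK := nonactivating_row_sparse (row_sparse_meas_kraus (E := E)).
congr (complex.Re _); apply: eq_bigr => j _.
by rewrite (mxtrace_nonactivating _ (fun=> erefl) naK (dephase_block_proj d j))
  kraus_dual_meas_kraus // incE.2.
Qed.

End IncoherentDiscrimination.

Theorem lemmaS2 (R : realType) (d k : nat)
    (p : 'I_k -> R) (rho : 'I_k -> 'M[R[i]]_d) :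
  ensemble p rho ->
  Psuc_MI p rho = Psuc_tilde (@SIO R (k * d) d) p rho /\
  Psuc_tilde (@SIO R (k * d) d) p rho = Psuc_tilde (@DIO R (k * d) d) p rho.
Proof.
move=> _; rewrite !Psuc_tilde_eq_MI //.
- exact: DIO_nonactivating.
- exact: DIO_meas_kraus.
- exact: SIO_nonactivating.
- exact: SIO_meas_kraus.
Qed.
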